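(* Let $k\geq 2$ be an integer and let $G=(V,E)$ be a graph on $n$ vertices. Let $\sim$ be a symmetric binary relation on $E$ such that for every $uv\in E$ and every $w\in V$, $w$ has at most $s$ neighbours $z\in V$ with $uv\sim wz$. Then the number of homomorphic $2k$-cycles $(x_1,\dots,x_{2k})$ in $G$ such that $x_ix_{i+1}\sim x_jx_{j+1}$ for some $i\neq j$ (indices modulo $2k$) is at most $$32k^{3/2}s^{1/2}\Delta(G)^{1/2}n^{\frac{1}{2k}}\hom(C_{2k},G)^{1-\frac{1}{2k}}.$$
   Context: A homomorphic $2k$-cycle in $G$ is a tuple $(x_1,\dots,x_{2k})\in V^{2k}$ (not necessarily distinct) with $x_ix_{i+1}\in E$ for all $1\leq i\leq 2k$, where $x_{2k+1}:=x_1$. $\hom(H,G)$ denotes the number of graph homomorphisms from $H$ to $G$ (maps $V(H)\to V(G)$ sending edges to edges); thus $\hom(C_{2k},G)$ is the number of homomorphic $2k$-cycles. $\Delta(G)$ is the maximum degree. *)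

From mathcomp Require Import all_boot all_order all_algebra.
From mathcomp Require Import all_classical all_reals all_analysis.
Set Implicit Arguments. Unset Strict Implicit. Unset Printing Implicit Defensive.

(* Simple graph: e : rel V symmetric and irreflexive, V a finType (n = #|V|).
   An edge uv is represented by the unordered pair [set u; v] : {set V}. *)
Definition simple_graph (V : finType) (e : rel V) : Prop :=
  symmetric e /\ irreflexive e.

Definition is_hom_cycle (V : finType) (e : rel V) (m : nat) (x : {ffun 'I_m -> V}) : bool :=
  [forall i : 'I_m, e (x i) (x (ordS i))].

Definition hom_cycle (V : finType) (e : rel V) (m : nat) : nat :=
  #|[set x : {ffun 'I_m -> V} | is_hom_cycle e x]|.

Definition max_deg (V : finType) (e : rel V) : nat :=
  \max_(v : V) #|[set w | e v w]|.

Definition cyc_edge (V : finType) (m : nat) (x : {ffun 'I_m -> V}) (i : 'I_m) : {set V} :=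
  [set x i; x (ordS i)].

Definition bad_cycles (V : finType) (e : rel V) (sim : rel {set V}) (m : nat) :=
  [set x : {ffun 'I_m -> V} | is_hom_cycle e x &&
     [exists i : 'I_m, exists j : 'I_m, (i != j) && sim (cyc_edge x i) (cyc_edge x j)]].

From mathcomp Require Import all_boot all_order all_algebra.
From mathcomp Require Import all_classical all_reals all_analysis.
From mathcomp Require Import zify ring.
Import Order.TTheory GRing.Theory Num.Theory.
Set Implicit Arguments. Unset Strict Implicit. Unset Printing Implicit Defensive.

(* Let W_j(u,v) be the number of walks of length j from u to v and
   T_j = sum_(u,v) W_j(u,v)^2 the number of closed walks of length 2j;
   thus T_0 = n and hom(C_2k, G) = T_k.  The proof has four steps.
   1. Log-convexity: T_(j+1) = sum W_j W_(j+2), so Cauchy-Schwarz gives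
      T_(j+1)^2 <= T_j T_(j+2); iterating, T_(k-1)^k <= n T_k^(k-1).
   2. Rotation: two related edges of a 2k-cycle lie at cyclic distance at
      most k, so after a rotation the first edge is related to one of the
      next k edges; hence #bad <= 2k B, where B counts such cycles.
   3. Such a cycle is c, u, a walk u...v of length k containing an edge
      related to cu (N(c,u,v) <= W_k(u,v) choices), and a walk v...c of
      length k-1: B = sum [cu in E] N(c,u,v) W_(k-1)(v,c).  As
      sum_c [cu in E] N(c,u,v) <= k s W_k(u,v) and deg c <= Delta, a weighted
      Cauchy-Schwarz inequality gives B^2 <= (k s T_k) (Delta T_(k-1)).
   4. Arithmetic: #bad^2 <= 4k^2 B^2 <= 4 k^3 s Delta T_k n^(1/k) T_k^(1-1/k).
   Steps 1-3 are carried out over nat, with s replaced by its integer part;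
   walks and cycles are represented by words (lists) over V. *)

Lemma double_le_add (t a b : nat) : t ^ 2 <= a * b -> 2 * t <= a + b.
Proof.
move=> h; rewrite -(@leq_exp2r _ _ 2) // expnMn.
apply: leq_trans (nat_AGM2 a b).1; rewrite (_ : 2 ^ 2 = 4) //.
by rewrite leq_mul2l.
Qed.

Lemma cauchy_schwarz_nat (I : finType) (n x p q : I -> nat) :
  (forall i, n i ^ 2 <= p i * q i) ->
  (\sum_i n i * x i) ^ 2 <= (\sum_i p i) * (\sum_i q i * x i ^ 2).
Proof.
move=> hnpq.
have -> : (\sum_i n i * x i) ^ 2 = \sum_i \sum_j (n i * x i) * (n j * x j).
  by rewrite expnS expn1 big_distrl; apply: eq_bigr => i _; rewrite big_distrr.
have -> : (\sum_i p i) * (\sum_i q i * x i ^ 2) = \sum_i \sum_j p i * (q j * x j ^ 2).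
  by rewrite big_distrl; apply: eq_bigr => i _; rewrite big_distrr.
rewrite -(@leq_pmul2l 2) // [X in _ <= X]mulSn mul1n.
rewrite [X in _ <= _ + X]exchange_big -big_split big_distrr /=.
apply: leq_sum => i _; rewrite -big_split big_distrr /=; apply: leq_sum => j _.
apply: double_le_add.
have -> : (n i * x i * (n j * x j)) ^ 2 = n i ^ 2 * n j ^ 2 * (x i * x j) ^ 2.
  by ring.
have -> : p i * (q j * x j ^ 2) * (p j * (q i * x i ^ 2)) =
          p i * q i * (p j * q j) * (x i * x j) ^ 2 by ring.
by rewrite leq_mul2r leq_mul ?orbT.
Qed.

Lemma nth_rot (T : Type) (x0 : T) j (s : seq T) p : j <= size s -> p < size s ->
  nth x0 (rot j s) p = nth x0 s ((p + j) %% size s).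
Proof.
move=> hj hp; rewrite /rot nth_cat size_drop.
case: ltnP => h; first by rewrite nth_drop modn_small addnC //; lia.
rewrite nth_take; last by lia.
suff -> : (p + j) %% size s = p - (size s - j) by [].
rewrite (_ : p + j = (p - (size s - j)) + size s); last by lia.
by rewrite modnDr modn_small //; lia.
Qed.

Section Words.
Variables (V : finType) (x0 : V).

Fixpoint words (m : nat) : seq (seq V) :=
  if m is m'.+1 then [seq x :: w | x <- enum V, w <- words m'] else [:: [::]].

Lemma mem_words m w : (w \in words m) = (size w == m).
Proof.
elim: m w => [|m IH] w; first by case: w.
case: w => [|a w] /=; first by apply/allpairsPdep; case=> x [t [_ _]].
apply/allpairsPdep/idP => [[x [t [_ ht [_ ->]]]]|hw].
  by rewrite -(eqP (_ : size t == m)) // -IH.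
by exists a, w; rewrite mem_enum IH; split.
Qed.

Lemma uniq_words m : uniq (words m).
Proof.
elim: m => [|m IH] //=; apply: allpairs_uniq_dep => //; first exact: enum_uniq.
by move=> [a w] [b t] /= _ _ [-> ->].
Qed.

Lemma sum_wordsS m (F : seq V -> nat) :
  \sum_(w <- words m.+1) F w = \sum_(x : V) \sum_(w <- words m) F (x :: w).
Proof. by rewrite /= big_allpairs_dep big_enum. Qed.

Lemma sum_words_cat a b (F : seq V -> nat) :
  \sum_(w <- words (a + b)) F w =
  \sum_(w1 <- words a) \sum_(w2 <- words b) F (w1 ++ w2).
Proof.
elim: a F => [|a IH] F; first by rewrite add0n /= big_seq1.
by rewrite addSn !sum_wordsS; apply: eq_bigr => x _; exact: IH.
Qed.

Lemma sum_words_rcons m (F : seq V -> nat) :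
  \sum_(w <- words m.+1) F w = \sum_(w <- words m) \sum_(b : V) F (rcons w b).
Proof.
rewrite -addn1 sum_words_cat; apply: eq_bigr => w _.
by rewrite sum_wordsS; apply: eq_bigr => b _; rewrite /= big_seq1 cats1.
Qed.

Lemma sum_words_rot m j (F : seq V -> nat) :
  \sum_(w <- words m) F (rot j w) = \sum_(w <- words m) F w.
Proof.
rewrite -(big_map (rot j) xpredT); apply: perm_big; apply: uniq_perm.
- by rewrite map_inj_uniq ?uniq_words //; exact: rot_inj.
- exact: uniq_words.
move=> w; rewrite mem_words; apply/mapP/idP => [[t ht ->]|hw].
  by rewrite size_rot -mem_words.
by exists (rotr j w); rewrite ?rotrK // mem_words size_rotr.
Qed.

Definition word_of m (x : {ffun 'I_m -> V}) : seq V := [seq x i | i <- enum 'I_m].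

Lemma nth_word_of m (x : {ffun 'I_m -> V}) (i : 'I_m) : nth x0 (word_of x) i = x i.
Proof. by rewrite /word_of (nth_map i) ?size_enum_ord ?nth_ord_enum. Qed.

Lemma size_word_of m (x : {ffun 'I_m -> V}) : size (word_of x) = m.
Proof. by rewrite size_map size_enum_ord. Qed.

Lemma sum_ffun_words m (F : seq V -> nat) :
  \sum_(x : {ffun 'I_m -> V}) F (word_of x) = \sum_(w <- words m) F w.
Proof.
rewrite -(big_map (@word_of m) xpredT); apply: perm_big; apply: uniq_perm.
- rewrite map_inj_uniq ?index_enum_uniq // => x y hxy; apply/ffunP => i.
  by rewrite -!nth_word_of hxy.
- exact: uniq_words.
move=> w; rewrite mem_words; apply/mapP/idP => [[x _ ->]|/eqP hw].
  by rewrite size_word_of.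
exists [ffun i : 'I_m => nth x0 w i]; first by rewrite mem_index_enum.
apply: (@eq_from_nth _ x0); rewrite ?size_word_of // => i hi.
by rewrite hw in hi; rewrite (nth_word_of _ (Ordinal hi)) ffunE.
Qed.

Lemma sum_indicator_eq (l : V) (b : bool) (G : V -> nat) :
  \sum_(w : V) ((b && (l == w)) * G w) = b * G l.
Proof.
rewrite (bigD1 l) //= eqxx andbT big1 ?addn0 // => w /negbTE.
by rewrite eq_sym => ->; rewrite andbF.
Qed.

End Words.

Section Walks.
Variables (V : finType) (e : rel V).
Hypothesis esym : symmetric e.

Definition walks m u v : nat :=
  \sum_(w <- words V m) (path e u w && (last u w == v)).

Lemma walks0 u v : walks 0 u v = (u == v).
Proof. by rewrite /walks /= big_seq1. Qed.

Lemma walks1 u v : walks 1 u v = e u v.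
Proof.
rewrite /walks sum_wordsS /= (eq_bigr (fun x => (e u v && (v == x)) * 1)).
  by rewrite sum_indicator_eq muln1.
move=> x _; rewrite big_seq1 /= andbT muln1.
by case: (eqVneq x v) => [->|hxv]; rewrite ?andbF.
Qed.

Lemma walks_add a b u v : walks (a + b) u v = \sum_(w : V) walks a u w * walks b w v.
Proof.
under [RHS]eq_bigr => w _ do rewrite /walks big_distrl /=.
rewrite exchange_big /= /walks sum_words_cat; apply: eq_bigr => w1 _.
rewrite sum_indicator_eq big_distrr /=; apply: eq_bigr => w2 _.
by rewrite cat_path last_cat; case: (path e u w1); rewrite ?mul1n ?mul0n.
Qed.

Lemma walks_sym m u v : walks m u v = walks m v u.
Proof.
elim: m u v => [|m IH] u v; first by rewrite !walks0 eq_sym.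
rewrite -addn1 walks_add addnC walks_add.
by apply: eq_bigr => w _; rewrite !walks1 IH esym mulnC.
Qed.

Definition walk_sq_sum j : nat := \sum_(u : V) \sum_(v : V) walks j u v ^ 2.

Lemma sum_closed_walks a b :
  \sum_(u : V) walks (a + b) u u = \sum_(u : V) \sum_(v : V) walks a u v * walks b u v.
Proof.
by apply: eq_bigr => u _; rewrite walks_add; apply: eq_bigr => v _; rewrite (walks_sym b).
Qed.

Lemma walk_sq_sum_closed j : walk_sq_sum j = \sum_(u : V) walks (j + j) u u.
Proof.
rewrite sum_closed_walks; apply: eq_bigr => u _; apply: eq_bigr => v _.
by rewrite expnS expn1.
Qed.

Lemma walk_sq_sum0 : walk_sq_sum 0 = #|V|.
Proof.
rewrite /walk_sq_sum -sum1_card; apply: eq_bigr => u _.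
rewrite (bigD1 u) //= walks0 eqxx big1 // => v /negbTE.
by rewrite walks0 eq_sym => ->.
Qed.

(* Log-convexity of T, by Cauchy-Schwarz: T(j+1) = sum W_j W_(j+2). *)
Lemma walk_sq_sum_logconvex j :
  walk_sq_sum j.+1 ^ 2 <= walk_sq_sum j * walk_sq_sum j.+2.
Proof.
have -> : walk_sq_sum j.+1 = \sum_(u : V) \sum_(v : V) walks j u v * walks j.+2 u v.
  rewrite walk_sq_sum_closed -sum_closed_walks.
  by congr (\sum_(u : V) walks _ u u); rewrite !addnS addSn.
rewrite /walk_sq_sum !pair_bigA /=.
apply: leq_trans (@cauchy_schwarz_nat _ (fun p => walks j p.1 p.2)
  (fun p => walks j.+2 p.1 p.2) (fun p => walks j p.1 p.2 ^ 2) (fun=> 1) _) _.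
  by move=> p; rewrite muln1.
by rewrite eq_leq //; congr (_ * _); apply: eq_bigr => p _; exact: mul1n.
Qed.

(* Iterating log-convexity from T 0 = n:  T_j^(j+1) <= T_0 * T_(j+1)^j. *)
Lemma walk_sq_sum_pow j : walk_sq_sum j ^ j.+1 <= walk_sq_sum 0 * walk_sq_sum j.+1 ^ j.
Proof.
elim: j => [|j IH]; first by rewrite expn1 expn0 muln1.
set T := walk_sq_sum.
have [->|hpos] := posnP (T j.+1); first by rewrite exp0n.
rewrite -(@leq_pmul2l (T j.+1 ^ j)) ?expn_gt0 ?hpos //.
have -> : T j.+1 ^ j * T j.+1 ^ j.+2 = (T j.+1 ^ 2) ^ j.+1.
  by rewrite -expnD -expnM; congr (_ ^ _); lia.
apply: (@leq_trans ((T j * T j.+2) ^ j.+1)).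
  by rewrite leq_exp2r // walk_sq_sum_logconvex.
by rewrite expnMn mulnA [T j.+1 ^ j * _]mulnC leq_mul2r IH orbT.
Qed.

End Walks.

Lemma card_set_indicator (T : finType) (P : pred T) :
  #|[set x | P x]| = \sum_x (P x : nat).
Proof. by rewrite -sum1dep_card big_mkcond /=; apply: eq_bigr => x _; case: (P x). Qed.

Section Cycles.
Variables (V : finType) (x0 : V) (e : rel V).
Hypothesis esym : symmetric e.

Definition cyclic_walk m (w : seq V) :=
  [forall i : 'I_m, e (nth x0 w i) (nth x0 w (i.+1 %% m))].

Lemma is_hom_cycleE m (x : {ffun 'I_m -> V}) :
  is_hom_cycle e x = cyclic_walk m (word_of x).
Proof.
apply: eq_forallb => i.
by rewrite -(@nth_word_of _ x0 _ x i) -(@nth_word_of _ x0 _ x (ordS i)).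
Qed.

Lemma cyclic_walk_path n c l : size l = n ->
  cyclic_walk n.+1 (c :: l) = path e c (rcons l c).
Proof.
move=> hl; apply/forallP/(pathP x0) => [h i hi|h i].
  rewrite size_rcons hl in hi; move: (h (Ordinal hi)) => /=.
  rewrite -rcons_cons !nth_rcons /= hl hi.
  move: hi; rewrite ltnS leq_eqVlt => /orP [/eqP ->|hlt].
    by rewrite ltnn modnn eqxx.
  by rewrite hlt modn_small.
have := h i; rewrite size_rcons hl ltn_ord => /(_ isT).
rewrite -rcons_cons !nth_rcons /= hl ltnS.
have := ltn_ord i; rewrite ltnS leq_eqVlt => /orP [/eqP ->|hlt].
  by rewrite ltnn eqxx modnn /=.
by rewrite hlt orbT modn_small.
Qed.

(* Equivalently, an e-cycle in the sense of path.v; this makes cyclic walks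
   invariant under rotation. *)
Lemma cyclic_walk_cycle m w : size w = m.+1 -> cyclic_walk m.+1 w = cycle e w.
Proof. by case: w => [//|c l] /= [hl]; rewrite cyclic_walk_path. Qed.

Lemma walks_rcons n v c :
  walks e n.+1 v c = \sum_(l <- words V n) (path e v (rcons l c) : nat).
Proof.
rewrite /walks sum_words_rcons; apply: eq_bigr => l _.
rewrite (eq_bigr (fun b => (path e v (rcons l c) && (c == b)) * 1)).
  by rewrite sum_indicator_eq muln1.
move=> b _; rewrite last_rcons muln1 eq_sym.
by case: (eqVneq c b) => [->|_]; rewrite ?andbF ?andbT.
Qed.

Lemma hom_cycle_closed_walks n : hom_cycle e n.+1 = \sum_(c : V) walks e n.+1 c c.
Proof.
rewrite /hom_cycle card_set_indicator.
under eq_bigr => x _ do rewrite is_hom_cycleE.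
rewrite (sum_ffun_words x0 n.+1 (fun w => cyclic_walk n.+1 w : nat)) sum_wordsS.
apply: eq_bigr => c _; rewrite walks_rcons big_seq [RHS]big_seq.
by apply: eq_bigr => l; rewrite mem_words => /eqP hl; rewrite cyclic_walk_path.
Qed.

Lemma hom_cycle_walk_sq_sum k : 0 < k -> hom_cycle e (2 * k) = walk_sq_sum e k.
Proof.
move=> hk; rewrite walk_sq_sum_closed // (_ : k + k = (2 * k).-1.+1); last by lia.
by rewrite -hom_cycle_closed_walks; congr hom_cycle; lia.
Qed.

End Cycles.

Section BadCycles.
Variables (V : finType) (x0 : V) (e : rel V) (sim : rel {set V}).
Hypothesis sim_sym : forall u v w z : V, e u v -> e w z ->
  sim [set u; v] [set w; z] = sim [set w; z] [set u; v].

Definition word_edge m (w : seq V) i := [set nth x0 w (i %% m); nth x0 w (i.+1 %% m)].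

Definition bad_word m w := cyclic_walk x0 e m w &&
  [exists i : 'I_m, exists j : 'I_m, (i != j) && sim (word_edge m w i) (word_edge m w j)].

Lemma card_bad_cycles m : #|bad_cycles e sim m| = \sum_(w <- words V m) (bad_word m w : nat).
Proof.
rewrite /bad_cycles card_set_indicator -(sum_ffun_words x0 m (fun w => bad_word m w : nat)).
apply: eq_bigr => x _; rewrite /bad_word -is_hom_cycleE; congr (nat_of_bool (_ && _)).
apply: eq_existsb => i; apply: eq_existsb => j; congr (_ && sim _ _).
  by rewrite /cyc_edge /word_edge modn_small // (nth_word_of x0 x i) -(nth_word_of x0 x (ordS i)).
by rewrite /cyc_edge /word_edge modn_small // (nth_word_of x0 x j) -(nth_word_of x0 x (ordS j)).
Qed.

Lemma word_edgeDm m w i : 0 < m -> word_edge m w (i + m) = word_edge m w i.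
Proof. by move=> hm; rewrite /word_edge -addSn !modnDr. Qed.

Lemma cyclic_walk_edge m w (i : 'I_m) : cyclic_walk x0 e m w ->
  e (nth x0 w (i %% m)) (nth x0 w (i.+1 %% m)).
Proof. by move=> /forallP /(_ i) h; rewrite (modn_small (ltn_ord i)). Qed.

Definition related_ahead k m w j :=
  [exists d : 'I_k, sim (word_edge m w (j + d.+1)) (word_edge m w j)].

Lemma related_pair_ahead k m w (a b : 'I_m) : m = k + k -> a < b ->
  sim (word_edge m w a) (word_edge m w b) -> sim (word_edge m w b) (word_edge m w a) ->
  exists j : 'I_m, related_ahead k m w j.
Proof.
move=> hm hab hab' hba; case: (leqP (b - a) k) => hd.
  have hd' : b - a - 1 < k by lia.
  exists a; apply/existsP; exists (Ordinal hd') => /=.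
  by rewrite (_ : a + (b - a - 1).+1 = b) //; lia.
have hd' : a + m - b - 1 < k by have := ltn_ord b; lia.
exists b; apply/existsP; exists (Ordinal hd') => /=.
rewrite (_ : b + (a + m - b - 1).+1 = a + m); last by have := ltn_ord b; lia.
by rewrite word_edgeDm //; lia.
Qed.

Lemma bad_word_le k m w : m = k + k ->
  bad_word m w <= \sum_(j : 'I_m) (cyclic_walk x0 e m w && related_ahead k m w j).
Proof.
move=> hm; case hb: (bad_word m w) => //.
move: hb => /andP [hw /existsP [i /existsP [j /andP [hij hs]]]].
have hs' : sim (word_edge m w j) (word_edge m w i).
  by rewrite /word_edge sim_sym // ?cyclic_walk_edge.
have [j0 hj0] : exists j : 'I_m, related_ahead k m w j.
  case: (ltngtP i j) => h.
  - exact: (related_pair_ahead hm h hs hs').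
  - exact: (related_pair_ahead hm h hs' hs).
  - by move: hij; rewrite (val_inj h) eqxx.
by rewrite (bigD1 j0) //= hw hj0.
Qed.

Lemma word_edge_rot m j w i : size w = m -> j <= m -> 0 < m ->
  word_edge m (rot j w) i = word_edge m w (i + j).
Proof.
by move=> hw hj hm; rewrite /word_edge !nth_rot ?hw ?ltn_pmod // !modnDml addSn.
Qed.

Lemma related_ahead_rot k m j w : size w = m -> j < m ->
  (cyclic_walk x0 e m (rot j w) && related_ahead k m (rot j w) 0) =
  (cyclic_walk x0 e m w && related_ahead k m w j).
Proof.
case: m => [//|m] hw hj.
rewrite !cyclic_walk_cycle ?size_rot // rot_cycle; congr (_ && _).
apply: eq_existsb => d; rewrite !word_edge_rot // ?(ltnW hj) //.
by rewrite add0n addnC.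
Qed.

Definition first_edge_related k :=
  \sum_(w <- words V (k + k))
    (cyclic_walk x0 e (k + k) w && related_ahead k (k + k) w 0 : nat).

(* Every bad cycle has a related edge pair ahead somewhere; rotating it to
   the front shows #bad <= 2k * first_edge_related k. *)
Lemma card_bad_cycles_le k :
  #|bad_cycles e sim (k + k)| <= (k + k) * first_edge_related k.
Proof.
rewrite card_bad_cycles.
apply: (@leq_trans (\sum_(w <- words V (k + k)) \sum_(j : 'I_(k + k))
    (cyclic_walk x0 e (k + k) w && related_ahead k (k + k) w j : nat))).
  by apply: leq_sum => w _; apply: bad_word_le.
rewrite exchange_big /= -[X in _ <= X * _](card_ord (k + k)) -sum1_card big_distrl /=.
apply: leq_sum => j _; rewrite mul1n /first_edge_related.
rewrite -(sum_words_rot _ j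
  (fun w => cyclic_walk x0 e (k + k) w && related_ahead k (k + k) w 0 : nat)).
rewrite big_seq [X in _ <= X]big_seq; apply: eq_leq; apply: eq_bigr => w.
by rewrite mem_words => /eqP hw; rewrite related_ahead_rot.
Qed.

Definition related_to_walk k u y c := [exists d : 'I_k,
  sim [set nth x0 (u :: y) d; nth x0 (u :: y) d.+1] [set c; u]].

Lemma first_edge_related_split k : 1 < k ->
  first_edge_related k =
  \sum_(c : V) \sum_(u : V) \sum_(y <- words V k)
     ((e c u && path e u y && related_to_walk k u y c) * walks e k.-1 (last u y) c).
Proof.
move=> hk; rewrite /first_edge_related.
have hm : k + k = (k + (k - 2)).+2 by lia.
rewrite hm sum_wordsS; apply: eq_bigr => c _; rewrite sum_wordsS; apply: eq_bigr => u _.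
rewrite sum_words_cat big_seq [RHS]big_seq; apply: eq_bigr => y.
rewrite mem_words => /eqP hy.
have -> : k.-1 = (k - 2).+1 by lia.
rewrite walks_rcons big_distrr /= big_seq [RHS]big_seq; apply: eq_bigr => z.
rewrite mem_words => /eqP hz.
rewrite cyclic_walk_path; last by rewrite /= size_cat hy hz; lia.
rewrite rcons_cons /= rcons_cat cat_path.
have -> : related_ahead k (k + (k - 2)).+2 [:: c, u & y ++ z] 0 = related_to_walk k u y c.
  apply: eq_existsb => d; rewrite add0n /word_edge.
  rewrite (modn_small (_ : d.+1 < _)); last by have := ltn_ord d; lia.
  rewrite (modn_small (_ : d.+2 < _)); last by have := ltn_ord d; lia.
  rewrite !modn_small //= -!cat_cons !nth_cat /= hy ltnS (ltnW (ltn_ord d)).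
  by rewrite ltn_ord.
by case: (e c u); case: (path e u y); case: (related_to_walk k u y c); case: (path _ _ _).
Qed.

Definition related_walks k c u v :=
  \sum_(y <- words V k) (path e u y && (last u y == v) && related_to_walk k u y c).

Lemma first_edge_related_triples k : 1 < k ->
  first_edge_related k =
  \sum_(c : V) \sum_(u : V) \sum_(v : V) e c u * related_walks k c u v * walks e k.-1 v c.
Proof.
move=> hk; rewrite first_edge_related_split //; apply: eq_bigr => c _.
apply: eq_bigr => u _.
have -> : \sum_(v : V) e c u * related_walks k c u v * walks e k.-1 v c =
  \sum_(v : V) \sum_(y <- words V k) (e c u && path e u y && related_to_walk k u y c
       && (last u y == v)) * walks e k.-1 v c.
  apply: eq_bigr => v _; rewrite /related_walks [e c u * _]big_distrr big_distrl /=.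
  apply: eq_bigr => y _; congr (_ * _).
  by case: (e c u); case: (path e u y); case: (last u y == v); case: (related_to_walk k u y c).
rewrite exchange_big /=; apply: eq_bigr => y _.
rewrite -(sum_indicator_eq (last u y) _ (fun v => walks e k.-1 v c)).
by apply: eq_bigr => v _; rewrite eq_sym.
Qed.

End BadCycles.

Lemma sum_triple (T : finType) (F : T -> T -> T -> nat) :
  \sum_(a : T) \sum_(b : T) \sum_(c : T) F a b c = \sum_(t : T * (T * T)) F t.1 t.2.1 t.2.2.
Proof. by under eq_bigr do rewrite pair_bigA; rewrite pair_bigA. Qed.

Section RelatedCount.
Variables (V : finType) (x0 : V) (e : rel V) (sim : rel {set V}) (S : nat).
Hypothesis esym : symmetric e.
Hypothesis sim_bound : forall u v w : V, e u v ->
  #|[set z | e w z && sim [set u; v] [set w; z]]| <= S.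

(* Each of the k edges of the walk u y is related to at most S edges at u. *)
Lemma related_to_walk_count k u y : size y = k -> path e u y ->
  \sum_(c : V) (e c u && related_to_walk x0 sim k u y c) <= k * S.
Proof.
move=> hy hp.
pose E (d : 'I_k) := [set nth x0 (u :: y) d; nth x0 (u :: y) d.+1].
apply: (@leq_trans (\sum_(c : V) \sum_(d : 'I_k) (e u c && sim (E d) [set u; c]))).
  apply: leq_sum => c _.
  case h: (e c u && related_to_walk x0 sim k u y c) => //.
  move: h => /andP [hcu /existsP [d hd]].
  by rewrite (bigD1 d) //= esym hcu /E (finset.setUC [set u]) hd.
rewrite exchange_big /= -[k in k * S]card_ord -sum_nat_const.
apply: leq_sum => d _; rewrite -card_set_indicator.
by apply: sim_bound; move/(pathP x0): hp => /(_ d); rewrite hy ltn_ord => /(_ isT).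
Qed.

Lemma related_walks_le k c u v : related_walks x0 e sim k c u v <= walks e k u v.
Proof.
rewrite /related_walks /walks; apply: leq_sum => y _.
by case: (path e u y); case: (last u y == v); rewrite /= ?leq_b1.
Qed.

Lemma sum_related_walks_le k u v :
  \sum_(c : V) e c u * related_walks x0 e sim k c u v <= k * S * walks e k u v.
Proof.
rewrite mulnC /walks big_distrl /=.
under eq_bigr => c _ do rewrite /related_walks big_distrr /=.
rewrite exchange_big big_seq [X in _ <= X]big_seq /=; apply: leq_sum => y.
rewrite mem_words => /eqP hy.
case hpv: (path e u y && (last u y == v)); last first.
  by rewrite big1 // => c _; rewrite muln0.
have hp : path e u y by case/andP: hpv.
rewrite mul1n; apply: leq_trans (related_to_walk_count hy hp).
by apply: leq_sum => c _; case: (e c u); rewrite ?mul1n ?mul0n.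
Qed.

Lemma sum_edges_le_max_deg c : \sum_(u : V) e c u <= max_deg e.
Proof.
by rewrite -card_set_indicator; exact: (@leq_bigmax _ (fun v => #|[set w | e v w]|) c).
Qed.

(* The core estimate, by a weighted Cauchy-Schwarz inequality over triples
   (c, u, v) with weights e c u * related_walks * walks k u v:
   first_edge_related k ^ 2 <= (k S T_k) * (Delta T_(k-1)). *)
Lemma first_edge_related_sq k : 1 < k ->
  first_edge_related x0 e sim k ^ 2 <=
  (k * S * walk_sq_sum e k) * (max_deg e * walk_sq_sum e k.-1).
Proof.
move=> hk; rewrite first_edge_related_triples //.
pose N (t : V * (V * V)) := related_walks x0 e sim k t.1 t.2.1 t.2.2.
pose A (t : V * (V * V)) := e t.1 t.2.1 : nat.
pose X (t : V * (V * V)) := walks e k.-1 t.2.2 t.1.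
have -> : \sum_(c : V) \sum_(u : V) \sum_(v : V)
    e c u * related_walks x0 e sim k c u v * walks e k.-1 v c = \sum_t A t * N t * X t.
  exact: sum_triple.
apply: leq_trans (@cauchy_schwarz_nat _ (fun t => A t * N t) X
  (fun t => A t * N t * walks e k t.2.1 t.2.2) A _) _.
  move=> t; rewrite expnS expn1 -[X in _ <= X]mulnA leq_mul2l [X in _ <= X]mulnC.
  by apply/orP; right; apply: leq_mul => //; exact: related_walks_le.
have sum_weights : \sum_t A t * N t * walks e k t.2.1 t.2.2 <= k * S * walk_sq_sum e k.
  have -> : \sum_t A t * N t * walks e k t.2.1 t.2.2 = \sum_(u : V) \sum_(v : V)
      (\sum_(c : V) e c u * related_walks x0 e sim k c u v) * walks e k u v.
    rewrite -(sum_triple (fun c u v =>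
      e c u * related_walks x0 e sim k c u v * walks e k u v)).
    rewrite exchange_big /=; apply: eq_bigr => u _.
    by rewrite exchange_big /=; apply: eq_bigr => v _; rewrite big_distrl.
  rewrite /walk_sq_sum big_distrr /=; apply: leq_sum => u _.
  rewrite big_distrr /=; apply: leq_sum => v _.
  by rewrite expnS expn1 mulnA leq_mul2r sum_related_walks_le orbT.
have sum_closing : \sum_t A t * X t ^ 2 <= max_deg e * walk_sq_sum e k.-1.
  have -> : \sum_t A t * X t ^ 2 = \sum_(c : V)
      (\sum_(u : V) e c u) * \sum_(v : V) walks e k.-1 v c ^ 2.
    rewrite -(sum_triple (fun c u v => e c u * walks e k.-1 v c ^ 2)).
    apply: eq_bigr => c _; rewrite big_distrl /=; apply: eq_bigr => u _.
    by rewrite big_distrr.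
  rewrite /walk_sq_sum exchange_big big_distrr /=; apply: leq_sum => c _.
  by rewrite leq_mul2r sum_edges_le_max_deg orbT.
exact: leq_mul.
Qed.

End RelatedCount.

Section RealBound.
Local Open Scope ring_scope.
Variable R : realType.

Lemma powR_exprn (x a : R) (m : nat) : 0 <= x -> (x `^ a) ^+ m = x `^ (a * m%:R).
Proof. by move=> hx; rewrite -(powR_mulrn _ (powR_ge0 _ _)) -powRrM. Qed.

Lemma le_geometric_mean (k : nat) (n H T : R) : (0 < k)%N -> 0 < n -> 0 < H ->
  0 <= T -> T ^+ k <= n * H ^+ k.-1 -> T <= n `^ k%:R^-1 * H `^ (1 - k%:R^-1).
Proof.
move=> hk hn hH hT hTk.
have kpos : 0 < k%:R :> R by rewrite ltr0n.
rewrite -(ler_pXn2r hk) ?nnegrE ?mulr_ge0 ?powR_ge0 //.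
rewrite exprMn !powR_exprn ?(ltW hn) ?(ltW hH) // mulVf ?lt0r_neq0 // powRr1 ?(ltW hn) //.
suff -> : (1 - k%:R^-1) * k%:R = (k.-1)%:R :> R by rewrite powR_mulrn ?(ltW hH).
by rewrite -subn1 natrB //; field; apply: lt0r_neq0.
Qed.

Lemma cycle_bound_arith (k : nat) (b B s D n H T : R) : (2 <= k)%N ->
  0 <= b -> b <= (2 * k)%:R * B -> 0 < s -> 0 < D -> 0 < n -> 0 < H -> 0 <= T ->
  B ^+ 2 <= (k%:R * s * H) * (D * T) -> T ^+ k <= n * H ^+ k.-1 ->
  b <= 32 * (k%:R `^ (3 / 2)) * (s `^ (1 / 2)) * (D `^ (1 / 2))
       * (n `^ (1 / (2 * k)%:R)) * (H `^ (1 - 1 / (2 * k)%:R)).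
Proof.
move=> hk hb hbB hs hD hn hH hT hB2 hTk.
have kpos : 0 < k%:R :> R by rewrite ltr0n; lia.
set Y := n `^ k%:R^-1 * H `^ (1 - k%:R^-1).
have hTY : T <= Y by apply: le_geometric_mean => //; lia.
set RHS := (X in b <= X).
have hRHS : RHS ^+ 2 = 1024 * k%:R ^+ 3 * s * D * Y * H.
  rewrite /RHS !exprMn !powR_exprn ?ler0n ?(ltW hs) ?(ltW hD) ?(ltW hn) ?(ltW hH) //.
  rewrite (_ : 3 / 2 * 2%:R = 3%:R); last by field.
  rewrite powR_mulrn ?ler0n // (_ : 1 / 2 * 2%:R = 1); last by field.
  rewrite !powRr1 ?(ltW hs) ?(ltW hD) //.
  rewrite (_ : 1 / (2 * k)%:R * 2%:R = k%:R^-1); last first.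
    by rewrite natrM; field; apply: lt0r_neq0.
  rewrite (_ : (1 - 1 / (2 * k)%:R) * 2%:R = (1 - k%:R^-1) + 1); last first.
    by rewrite natrM; field; apply: lt0r_neq0.
  rewrite powRD; last by rewrite (lt0r_neq0 hH) implybT.
  by rewrite powRr1 ?(ltW hH) /Y; ring.
apply: (le_trans hbB).
rewrite -(ler_pXn2r (isT : (0 < 2)%N)) ?nnegrE ?(le_trans hb hbB) ?mulr_ge0 ?powR_ge0 //.
rewrite hRHS exprMn natrM.
apply: (@le_trans _ _ ((2 * k%:R) ^+ 2 * ((k%:R * s * H) * (D * Y)))).
  apply: ler_wpM2l; first exact: sqr_ge0.
  apply: (le_trans hB2); apply: ler_wpM2l; first by rewrite !mulr_ge0 ?ler0n ?ltW.
  by apply: ler_wpM2l => //; exact: ltW.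
have hP : 0 <= k%:R ^+ 3 * s * D * H * Y.
  by rewrite !mulr_ge0 ?ler0n ?(ltW hs) ?(ltW hD) ?(ltW hH) ?powR_ge0.
rewrite (_ : (2 * k%:R) ^+ 2 * _ = 4 * (k%:R ^+ 3 * s * D * H * Y)); last by ring.
rewrite (_ : 1024 * _ * _ * _ * _ * _ = 1024 * (k%:R ^+ 3 * s * D * H * Y)); last by ring.
by apply: ler_wpM2r => //; rewrite ler_nat.
Qed.

(* The final bound from the three counting estimates of steps 1-3, where
   S <= s; if B = 0 there are no bad cycles, otherwise all quantities are
   positive and cycle_bound_arith applies. *)
Lemma cycle_bound_nat (k b B S D n H T : nat) (s : R) : (2 <= k)%N -> (0 < n)%N ->
  S%:R <= s -> (b <= 2 * k * B)%N -> (B ^ 2 <= k * S * H * (D * T))%N ->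
  (T ^ k <= n * H ^ k.-1)%N ->
  b%:R <= 32 * (k%:R `^ (3 / 2)) * (s `^ (1 / 2)) * (D%:R `^ (1 / 2))
       * (n%:R `^ (1 / (2 * k)%:R)) * (H%:R `^ (1 - 1 / (2 * k)%:R)).
Proof.
move=> hk hn hSs hbB hB hT.
have [B0|Bpos] := posnP B.
  by move: hbB; rewrite B0 muln0 leqn0 => /eqP ->; rewrite !mulr_ge0 ?powR_ge0.
have : (0 < k * S * H * (D * T))%N by apply: leq_trans hB; rewrite expn_gt0 Bpos.
rewrite !muln_gt0 => /andP [/andP [/andP [_ Spos] Hpos] /andP [Dpos _]].
apply: (@cycle_bound_arith k _ B%:R s _ _ _ T%:R hk (ler0n _ _)); rewrite ?ltr0n //.
- by rewrite -natrM ler_nat.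
- by apply: lt_le_trans hSs; rewrite ltr0n.
- apply: (@le_trans _ _ (k * S * H * (D * T))%N%:R); first by rewrite -natrX ler_nat.
  rewrite !natrM; apply: ler_wpM2r; first exact: mulr_ge0.
  by apply: ler_wpM2r => //; apply: ler_wpM2l.
- by rewrite -!natrX -natrM ler_nat.
Qed.

End RealBound.

Local Open Scope ring_scope.

Theorem lemma2p1 (R : realType) (k : nat) (V : finType) (e : rel V)
    (sim : rel {set V}) (s : R) :
  (2 <= k)%N -> 0 <= s ->
  simple_graph e ->
  (* ~ is a symmetric relation on E *)
  (forall u v w z : V, e u v -> e w z ->
     sim [set u; v] [set w; z] = sim [set w; z] [set u; v]) ->
  (* every w has at most s neighbours z with uv ~ wz, for every edge uv *)
  (forall u v w : V, e u v ->
     (#|[set z | e w z && sim [set u; v] [set w; z]]|)%:R <= s) ->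
  (#|bad_cycles e sim (2 * k)|)%:R <=
    32 * (k%:R `^ (3 / 2)) * (s `^ (1 / 2)) * ((max_deg e)%:R `^ (1 / 2))
       * (#|V|%:R `^ (1 / (2 * k)%:R))
       * ((hom_cycle e (2 * k))%:R `^ (1 - 1 / (2 * k)%:R)).
Proof.
move=> hk hs0 [esym _] sim_sym sim_bound.
have [->|[x _]] := set_0Vmem (bad_cycles e sim (2 * k)).
  by rewrite cards0 !mulr_ge0 ?powR_ge0.
have x0 : V by apply: x; exists 0%N; lia.
(* The integer part of s bounds the same counts. *)
have hS u v w : e u v ->
    (#|[set z | e w z && sim [set u; v] [set w; z]]| <= Num.truncn s)%N.
  by move=> huv; rewrite truncn_ge_nat // sim_bound.
rewrite hom_cycle_walk_sq_sum //; last by lia.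
apply: (@cycle_bound_nat R k _ (first_edge_related x0 e sim k) (Num.truncn s) _ _ _
  (walk_sq_sum e k.-1) s hk); rewrite ?truncn_le //.
- by apply/card_gt0P; exists x0.
- by rewrite (_ : (2 * k = k + k)%N); [exact: card_bad_cycles_le | lia].
- exact: first_edge_related_sq.
- by have := walk_sq_sum_pow esym k.-1; rewrite prednK ?walk_sq_sum0 //; lia.
Qed.
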